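(* Let $A$ be a finite nonempty subset of $(0,\infty)$ and let $g:A\to[0,\infty)$. Let $f=g\circ g$ be the function defined on $A_2=\{a\in A: g(a)\in A\}$ by $f(a)=g(g(a))$, and let $h_{g\circ g}=\{(f(a)/a,\,a): a\in A_2\}$. Then $h_{g\circ g}=g$ (i.e. $\{(g(g(a))/a,a):a\in A_2\}=\{(a,g(a)):a\in A\}$) if and only if $A$ has exactly one element and $f=\{(1,1)\}$ (equivalently $A=\{1\}$ and $g(1)=1$).
   Context: For a function $f$ on a finite set $B\subset(0,\infty)$, the Hirsch function $h_f$ is defined exactly at the points $f(b)/b$, $b\in B$, and maps $f(b)/b$ to $b$. Equality of functions means same domain and same values. *)

From HB Require Import structures.
From mathcomp Require Import all_boot all_order all_algebra.
From mathcomp Require Import all_classical all_reals.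
Set Implicit Arguments. Unset Strict Implicit. Unset Printing Implicit Defensive.
Import Order.TTheory GRing.Theory Num.Theory.
Local Open Scope classical_set_scope.
Local Open Scope ring_scope.

Definition graph_on {R : realType} (D : set R) (F : R -> R) : set (R * R) :=
  [set p | exists a, D a /\ p = (a, F a)].

Definition dom2 {R : realType} (A : set R) (g : R -> R) : set R :=
  [set a | A a /\ A (g a)].

Definition hirsch {R : realType} (D : set R) (F : R -> R) : set (R * R) :=
  [set p | exists b, D b /\ p = (F b / b, b)].

(** If h_{g∘g} = g, every point (a, g a) of g is some (g (g b) / b, b), so
  b = g a lies in A and g (g (g a)) = g a * a; conversely every b in A is a
  value of g.  Hence g permutes the finite set A, and x := ln satisfies the
  Padovan recurrence x (σ³ a) = x (σ a) + x a along σ := g.  Sums over A are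
  σ-invariant, so summing H (σ² a) for H b := x (σ b) * x b gives
  Σ x (σ² a) * x a = 0, and summing the squared recurrence then gives
  Σ (x a)² = 0; thus A = {1}. *)

From HB Require Import structures.
From mathcomp Require Import all_boot all_order all_algebra.
From mathcomp Require Import all_classical all_reals.
From mathcomp Require Import finmap ring exp.
Set Implicit Arguments.
Unset Strict Implicit.
Import Order.TTheory GRing.Theory Num.Theory.
Local Open Scope classical_set_scope.
Local Open Scope ring_scope.

Section PadovanAlongPermutation.
Variables (T : eqType) (R : realDomainType) (s : seq T) (sigma : T -> T).
Hypothesis perm_sigma : perm_eq (map sigma s) s.

Lemma sum_comp_perm (F : T -> R) :
  \sum_(a <- s) F (sigma a) = \sum_(a <- s) F a.
Proof. by rewrite -[RHS](perm_big _ perm_sigma) big_map. Qed.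

Lemma padovan_perm_eq0 (x : T -> R) :
  {in s, forall a, x (sigma (sigma (sigma a))) = x (sigma a) + x a} ->
  {in s, forall a, x a = 0}.
Proof.
move=> padovan.
pose H b := x (sigma b) * x b.
have cross_eq0 : \sum_(a <- s) x (sigma (sigma a)) * x a = 0.
  have : \sum_(a <- s) H (sigma (sigma a)) =
         \sum_(a <- s) (x (sigma (sigma a)) * x a + H (sigma a)).
    by apply: eq_big_seq => a sa; rewrite /H padovan //; ring.
  rewrite big_split /= (sum_comp_perm (fun a => H (sigma a))) !(sum_comp_perm H).
  by move/eqP; rewrite -[X in X == _]add0r (inj_eq (addIr _)) eq_sym => /eqP.
have sqr_sum_eq0 : \sum_(a <- s) x a ^+ 2 = 0.
  have : \sum_(a <- s) x (sigma (sigma (sigma a))) ^+ 2 =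
         \sum_(a <- s) (x a ^+ 2 - x (sigma a) ^+ 2
                        + 2 * (x (sigma (sigma (sigma a))) * x (sigma a))).
    by apply: eq_big_seq => a sa; rewrite padovan //; ring.
  rewrite !big_split /= sumrN -mulr_sumr.
  rewrite (sum_comp_perm (fun b => x (sigma (sigma b)) * x b)) cross_eq0.
  rewrite (sum_comp_perm (fun b => x (sigma (sigma b)) ^+ 2)).
  rewrite (sum_comp_perm (fun b => x (sigma b) ^+ 2)) (sum_comp_perm (fun b => x b ^+ 2)).
  by rewrite mulr0 addr0 subrr.
move=> a sa; apply/eqP; rewrite -sqrf_eq0.
move/eqP: sqr_sum_eq0; rewrite psumr_eq0 => [/allP/(_ a sa)/implyP -> //|b _].
exact: sqr_ge0.
Qed.

End PadovanAlongPermutation.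

Lemma finite_image_perm_enum {T : choiceType} {A : set T} {g : T -> T} :
  finite_set A -> g @` A = A ->
  exists2 s : seq T, A = [set` s] & perm_eq (map g s) s.
Proof.
move=> /finite_fsetP[X ->] gX; exists (X : seq T) => //.
have X_sub_gX : {subset X <= map g X}.
  move=> b Xb; have : [set` X] b by [].
  by rewrite -{1}gX => -[a Xa <-]; apply: map_f.
have [_ gX_eq] := uniq_min_size (fset_uniq X) X_sub_gX (eq_leq (size_map g X)).
apply: uniq_perm; last by move=> b; rewrite gX_eq.
- by rewrite (uniq_size_uniq (fset_uniq X) gX_eq) size_map.
- exact: fset_uniq.
Qed.

Section HirschOfSquareIsGraph.
Variables (R : realType) (A : set R) (g : R -> R).
Hypothesis A_gt0 : forall a, A a -> 0 < a.
Hypothesis hirsch_eq_graph : hirsch (dom2 A g) (fun a => g (g a)) = graph_on A g.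

Lemma hirsch_graph_step a : A a -> A (g a) /\ g (g (g a)) = g a * a.
Proof.
move=> Aa; have : graph_on A g (a, g a) by exists a.
rewrite -hirsch_eq_graph => -[b [[Ab _] [a_eq ga_b]]].
by rewrite ga_b a_eq mulrC divfK // gt_eqF ?A_gt0.
Qed.

Lemma hirsch_graph_image : g @` A = A.
Proof.
apply/seteqP; split => [_ [a Aa <-]|b Ab]; first exact: (hirsch_graph_step Aa).1.
have : hirsch (dom2 A g) (fun a => g (g a)) (g (g b) / b, b).
  by exists b; do !split => //; exact: (hirsch_graph_step Ab).1.
by rewrite hirsch_eq_graph => -[a [Aa [_ ->]]]; exists a.
Qed.

Lemma hirsch_graph_eq1 : finite_set A -> forall a, A a -> a = 1.
Proof.
move=> finA; have [s As perm_g] := finite_image_perm_enum finA hirsch_graph_image.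
have ln_padovan : {in s, forall a, ln (g (g (g a))) = ln (g a) + ln a}.
  move=> a sa; have Aa : A a by rewrite As.
  have [Aga ->] := hirsch_graph_step Aa.
  by rewrite lnM // posrE A_gt0.
move=> a Aa; apply/eqP; rewrite -ln_eq0 ?A_gt0 //; apply/eqP.
by apply: (padovan_perm_eq0 perm_g ln_padovan); move: Aa; rewrite As.
Qed.

End HirschOfSquareIsGraph.

Lemma graph_on_set1 {R : realType} (x : R) (F : R -> R) :
  graph_on [set x] F = [set (x, F x)].
Proof. by apply/seteqP; split => [_ [a [-> ->]] | _ ->] //; exists x. Qed.

Lemma hirsch_set1 {R : realType} (x : R) (F : R -> R) :
  hirsch [set x] F = [set (F x / x, x)].
Proof. by apply/seteqP; split => [_ [a [-> ->]] | _ ->] //; exists x. Qed.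

Lemma dom2_set1 {R : realType} (x : R) (g : R -> R) :
  g x = x -> dom2 [set x] g = [set x].
Proof. by move=> gx; apply/seteqP; split => [a [] | a /= ->]. Qed.

Theorem theorem11 (R : realType) (A : set R) (g : R -> R) :
  finite_set A -> A !=set0 ->
  (forall a, A a -> 0 < a) ->
  (forall a, A a -> 0 <= g a) ->
  (hirsch (dom2 A g) (fun a => g (g a)) = graph_on A g <->
   ((exists x, A = [set x]) /\
    graph_on (dom2 A g) (fun a => g (g a)) = [set (1, 1)])).
Proof.
move=> finA [a0 Aa0] A_gt0 _; split => [E | [[x ->] graph11]].
- have A_eq1 := hirsch_graph_eq1 A_gt0 E finA.
  have A1 : A = [set 1].
    by apply/seteqP; split => [a /A_eq1 | _ ->] //; rewrite -(A_eq1 _ Aa0).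
  have g1 : g 1 = 1.
    by apply/A_eq1/(hirsch_graph_step A_gt0 E (_ : A 1)).1; rewrite A1.
  split; first by exists 1.
  by rewrite A1 dom2_set1 // graph_on_set1 !g1.
- have : graph_on (dom2 [set x] g) (fun a => g (g a)) (1, 1) by rewrite graph11.
  move=> [a [[/= ax gax] [a1 _]]]; subst a x.
  by rewrite dom2_set1 // hirsch_set1 graph_on_set1 !gax divr1.
Qed.
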